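(* Let $G=(V,E)$ be a finite graph and consider the graphical representation of the rescaled SEIS process on $G$ with parameters $\lambda>0,\tau>0$. Then for each $T>0$, with probability tending to $1$ as $\tau\to\infty$, the following holds: for every onset label $\star$ at a point $(x,t)\in\mathcal{S}$ with $t\le T$ there is a $t'>t$ and a recovery label $\times$ at $(x,t')$ such that there are no onset labels in $V\times(t,t']$.
   Context: The spacetime set is $\mathcal{S}=V\times[0,\infty)$. The graphical representation of the rescaled SEIS process consists of independent Poisson point processes along the fibres: at each site $x\in V$, recovery labels $\times$ with intensity $\tau$ and onset labels $\star$ with intensity $1$; along each edge $xy\in E$, transmission labels $\leftrightarrow$ with intensity $\lambda\tau$. *)

From HB Require Import structures.
From mathcomp Require Import all_boot all_order all_algebra.
From mathcomp Require Import all_classical all_reals all_analysis.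
From Stdlib Require List.
Set Implicit Arguments. Unset Strict Implicit. Unset Printing Implicit Defensive.
Import Order.TTheory GRing.Theory Num.Theory.
Local Open Scope classical_set_scope.
Local Open Scope ring_scope.

(* Kinds of Poisson processes in the graphical representation of the SEIS
   process on a finite graph G = (V, Ed), Ed a set of 2-element subsets of V:
   recovery labels at sites, onset labels at sites, transmission labels on edges. *)
Inductive plabel (V : finType) :=
  | Recov of V
  | Onset of V
  | Trans of {set V}.

Definition plabel_valid (V : finType) (Ed : {set {set V}}) (l : plabel V) : Prop :=
  match l with
  | Recov _ => True
  | Onset _ => True
  | Trans e => e \in Ed
  end.

Definition plabel_rate (R : realType) (V : finType) (lam tau : R)
    (l : plabel V) : R :=
  match l with
  | Recov _ => tau
  | Onset _ => 1
  | Trans _ => lam * tau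
  end.

Definition mutually_independent d (Omega : measurableType d) (R : realType)
    (P : probability Omega R) (I : Type) (valid : I -> Prop)
    (X : I -> Omega -> R) : Prop :=
  forall (s : seq I) (B : I -> set R),
    List.NoDup s ->
    (forall i, List.In i s -> valid i /\ measurable (B i)) ->
    P (\bigcap_(i in [set i | List.In i s]) (X i @^-1` B i)) =
    (\prod_(i <- s) P (X i @^-1` B i))%E.

(* A graphical representation of the rescaled SEIS process with parameters
   lam, tau on the probability space (Omega, P): each Poisson process on
   [0, oo) is given by its i.i.d. exponential inter-arrival times
   gap l 0, gap l 1, ...; all inter-arrival times of all processes are
   mutually independent. *)
Record graphical_rep d (Omega : measurableType d) (R : realType)
    (P : probability Omega R) (V : finType) (Ed : {set {set V}})
    (lam tau : R) := GraphicalRep {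
  gap : plabel V -> nat -> Omega -> R ;
  gap_measurable : forall l n, plabel_valid Ed l ->
    measurable_fun setT (gap l n) ;
  gap_law : forall l n (B : set R), plabel_valid Ed l -> measurable B ->
    P (gap l n @^-1` B) = exponential_prob (plabel_rate lam tau l) B ;
  gap_indep : mutually_independent P
    (fun ln : plabel V * nat => plabel_valid Ed ln.1)
    (fun ln => gap ln.1 ln.2)
}.

(* time of the k-th (k = 0, 1, ...) point of process l *)
Definition arrival d (Omega : measurableType d) (R : realType)
    (P : probability Omega R) (V : finType) (Ed : {set {set V}}) (lam tau : R)
    (G : graphical_rep P Ed lam tau) (l : plabel V) (k : nat) (w : Omega) : R :=
  \sum_(j < k.+1) gap G l j w.

Definition has_label d (Omega : measurableType d) (R : realType)
    (P : probability Omega R) (V : finType) (Ed : {set {set V}}) (lam tau : R)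
    (G : graphical_rep P Ed lam tau) (l : plabel V) (w : Omega) (t : R) : Prop :=
  exists k, arrival G l k w = t.

Definition good_event d (Omega : measurableType d) (R : realType)
    (P : probability Omega R) (V : finType) (Ed : {set {set V}}) (lam tau : R)
    (G : graphical_rep P Ed lam tau) (T : R) : set Omega :=
  [set w | forall (x : V) (t : R), t <= T -> has_label G (Onset x) w t ->
     exists t', t < t' /\ has_label G (Recov x) w t' /\
       forall (y : V) (s : R), t < s -> s <= t' -> ~ has_label G (Onset y) w s].

From HB Require Import structures.
From mathcomp Require Import all_boot all_order all_algebra.
From mathcomp Require Import all_classical all_reals all_analysis.
From Stdlib Require List.
From mathcomp Require Import ring lra zify measurable_realfun.
Import Order.TTheory GRing.Theory Num.Theory.
Local Open Scope classical_set_scope.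
Local Open Scope ring_scope.
Set Implicit Arguments. Unset Strict Implicit. Unset Printing Implicit Defensive.

(* Fix an onset label at (x, t) with t <= T.  With high probability every
   site carries at most N onset labels before time T + 1, and no two of them,
   at the same site or at different sites, are closer than dl.  Recovery gaps
   have rate tau, so for tau large all of the first (K + 1) L recovery gaps at
   each site are at most dl, while each of K + 1 consecutive blocks of L of
   them contains one larger than dl / 2, so that the recovery labels at x pass
   time T.  Then the first recovery label at x after t comes before t + dl,
   with no onset label in between.  Taking L of order expR (3 tau dl / 4)
   makes both recovery events unlikely at once. *)

Section real_inequalities.
Variable R : realType.

Lemma bernoulli_mul_le1 (p : R) n : 0 <= p -> p <= 1 ->
  (1 - p) ^+ n * (1 + n%:R * p) <= 1.
Proof.
move=> p0 p1; elim: n => [|n IH]; first by rewrite expr0 mul1r mul0r addr0.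
rewrite exprS -mulrA; apply: le_trans IH.
have q0 : 0 <= (1 - p) ^+ n by rewrite exprn_ge0 // subr_ge0.
move: q0; set q := (1 - p) ^+ n => q0.
have n0 : 0 <= n%:R :> R by [].
have h : 0 <= q * (p * (n%:R * p + p)) by rewrite !mulr_ge0 // addr_ge0 // mulr_ge0.
rewrite -natr1; nra.
Qed.

Lemma geometric_mul_le (n e p : R) : 0 <= n -> 0 < e -> 0 < p -> p <= 1 ->
  exists N : nat, n * (1 - p) ^+ N.+1 <= e.
Proof.
move=> n0 e0 p0 p1; exists (Num.truncn (n / (e * p))).
set m : R := (Num.truncn (n / (e * p))).+1%:R.
have hm : n < m * (e * p) by rewrite -ltr_pdivrMr ?mulr_gt0 //; exact: truncnS_gt.
have hb := bernoulli_mul_le1 (Num.truncn (n / (e * p))).+1 (ltW p0) p1.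
have q0 : 0 <= (1 - p) ^+ (Num.truncn (n / (e * p))).+1 by rewrite exprn_ge0 // subr_ge0.
move: hb q0; rewrite -/m; set q := (1 - p) ^+ _ => hb q0.
have h : n * q <= m * (e * p) * q by rewrite ler_wpM2r // ltW.
nra.
Qed.

Lemma exists_small_step (D e : R) : 0 <= D -> 0 < e ->
  exists2 dl, 0 < dl <= 1 & dl * D <= e.
Proof.
move=> D0 e0; exists (e / (D + e)).
  by rewrite divr_gt0 ?ler_pdivrMr /=; lra.
by rewrite mulrAC ler_pdivrMr; nra.
Qed.

(* Used with [u = expR (tau * dl / 4)]: a recovery gap exceeds [dl] with
   probability [u ^- 4] and is at most [dl / 2] with probability [1 - u ^- 2]. *)
Lemma block_length_tradeoff (A e u : R) : 0 <= A -> 1 <= u -> 2 * A <= e * u ->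
  let L := (Num.truncn (u ^+ 3)).+1 in
  A * L%:R / u ^+ 4 <= e /\ A * (1 - (u ^+ 2)^-1) ^+ L <= e.
Proof.
move=> A0 u1 hA L; have u0 : 0 < u by lra.
have u3 : 1 <= u ^+ 3 by exact: exprn_ege1.
have hLu : u ^+ 3 < L%:R by exact: truncnS_gt.
have hLu' : L%:R <= u ^+ 3 + 1 by rewrite -natr1 lerD2r truncn_le exprn_ge0 // ltW.
split.
  rewrite ler_pdivrMr ?exprn_gt0 // [u ^+ 4]exprSr.
  have h1 : A * L%:R <= A * (2 * u ^+ 3) by rewrite ler_wpM2l //; lra.
  have h2 : 2 * A * u ^+ 3 <= e * u * u ^+ 3 by rewrite ler_wpM2r // exprn_ge0 // ltW.
  by apply: le_trans h1 _; rewrite (mulrC (u ^+ 3)) mulrA; lra.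
set q := (u ^+ 2)^-1.
have q0 : 0 <= q by rewrite invr_ge0 exprn_ge0 // ltW.
have q1 : q <= 1 by rewrite invf_le1 ?exprn_gt0 // exprn_ege1.
have hb := bernoulli_mul_le1 L q0 q1.
have uq : u <= L%:R * q.
  by rewrite ler_pdivlMr ?exprn_gt0 // -exprS ltW.
have Y0 : 0 <= (1 - q) ^+ L by rewrite exprn_ge0 // subr_ge0.
have Yu : (1 - q) ^+ L * u <= 1.
  by apply: le_trans hb; apply: ler_wpM2l => //; lra.
rewrite -(ler_pM2r u0) -mulrA; apply: (@le_trans _ _ A); last lra.
by rewrite -[leRHS]mulr1 ler_wpM2l.
Qed.

Lemma recovery_block_choice (A e dl : R) : 0 <= A -> 0 < e -> 0 < dl ->
  exists tau0 : R, forall tau, tau0 <= tau -> exists L : nat,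
    A * L%:R * expR (- tau * dl) <= e /\ A * (1 - expR (- tau * (dl / 2))) ^+ L <= e.
Proof.
move=> A0 e0 dl0; exists (8 * A / (e * dl)) => tau tau_ge.
have tau0 : 0 <= tau.
  by apply: le_trans tau_ge; rewrite divr_ge0 ?mulr_ge0 // ltW.
set u := expR (tau * dl / 4).
have x0 : 0 <= tau * dl / 4 by rewrite divr_ge0 ?mulr_ge0 // ltW.
have ux : 1 + tau * dl / 4 <= u := expR_ge1Dx _.
have u1 : 1 <= u by lra.
have hA : 2 * A <= e * u.
  have := ler_wpM2l (ltW e0) ux.
  move: tau_ge; rewrite ler_pdivrMr ?mulr_gt0 //; lra.
have [h1 h2] := block_length_tradeoff A0 u1 hA.
have E4 : expR (- tau * dl) = (u ^+ 4)^-1.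
  by rewrite /u -expRM_natr -expRN; congr expR; field.
have E2 : expR (- tau * (dl / 2)) = (u ^+ 2)^-1.
  by rewrite /u -expRM_natr -expRN; congr expR; field.
by exists (Num.truncn (u ^+ 3)).+1; rewrite E4 E2.
Qed.

End real_inequalities.

Section exponential_distribution.
Variable R : realType.

Lemma exponential_prob_itvNy0 (r : R) : exponential_prob r `]-oo, 0[ = 0%E.
Proof.
rewrite /exponential_prob integral0_eq // => x /=; rewrite in_itv /= => x0.
by rewrite lt0_exponential_pdf.
Qed.

Lemma exponential_prob_itvNyc (r a : R) : 0 < r -> 0 < a ->
  exponential_prob r `]-oo, a] = (1 - (expR (- r * a))%:E)%E.
Proof.
move=> r0 a0.
have -> : [set` `]-oo, a]] = [set` `]-oo, 0[] `|` [set` `[0, a]] :> set R.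
  apply/seteqP; split => x /=; rewrite !in_itv /=.
    by move=> xa; case: (ltP x 0) => x0; [left|right; rewrite xa andbT].
  by case=> [x0|/andP[_ ->]] //; apply: ltW; apply: lt_trans a0.
rewrite /exponential_prob ge0_integral_setU //=.
- rewrite -/(exponential_prob r _) exponential_prob_itvNy0 add0e.
  by rewrite -/(exponential_prob r _) exponential_prob_itv0c.
- apply/measurable_EFinP; apply: measurable_funTS.
  exact: measurable_exponential_pdf.
- by move=> x _; rewrite lee_fin exponential_pdf_ge0 // ltW.
- apply/disj_setPS => x [/=]; rewrite !in_itv /= => x0 /andP[x0' _].
  by move: (lt_le_trans x0 x0'); rewrite ltxx.
Qed.

Lemma exponential_prob_itvcy (r a : R) : 0 < r -> 0 < a ->
  exponential_prob r `]a, +oo[ = (expR (- r * a))%:E.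
Proof.
move=> r0 a0; have mP := @measurable_itv R.
rewrite -setCitvl probability_setC //.
change (1 - exponential_prob r `]-oo, a] = (expR (- r * a))%:E)%E.
rewrite exponential_prob_itvNyc //.
by rewrite oppeB // addeA subee // add0e.
Qed.

Lemma exponential_prob_itv_le (r a b : R) : 0 <= r -> a <= b ->
  (exponential_prob r `[a, b] <= (r * (b - a))%:E)%E.
Proof.
move=> r0 ab; rewrite /exponential_prob.
apply: (@le_trans _ _ (\int[lebesgue_measure]_(x in `[a, b]) (cst r%:E x))%E).
  apply: ge0_le_integral => //.
  - by move=> x _; rewrite lee_fin exponential_pdf_ge0.
  - apply/measurable_EFinP; apply: measurable_funTS.
    exact: measurable_exponential_pdf.
  - move=> x _; rewrite lee_fin /exponential_pdf patchE.
    case: ifPn => //; rewrite inE /= in_itv /= andbT => x0.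
    by rewrite -[leRHS]mulr1 ler_wpM2l // expR_le1 mulNr oppr_le0 mulr_ge0.
have := lebesgue_measure_itv `[a, b]; rewrite integral_cst //= => ->.
by rewrite lte_fin; case: ltgtP ab => // -> _; rewrite mule0 subrr mulr0.
Qed.

End exponential_distribution.

Lemma In_mem (T : eqType) (x : T) (s : seq T) : List.In x s <-> x \in s.
Proof.
elim: s => [|a s IH] //=; rewrite in_cons; split.
  by case=> [->|/IH ->]; rewrite ?eqxx ?orbT.
by case/orP => [/eqP ->|/IH]; [left|right].
Qed.

Lemma uniq_NoDup (T : eqType) (s : seq T) : uniq s -> List.NoDup s.
Proof.
elim: s => [|a s IH] /=; first by constructor.
case/andP => a_s s_uniq; constructor; last exact: IH.
by rewrite In_mem; apply/negP.
Qed.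

Section bigcap_List_In.
Variables (T I : Type) (F : I -> set T).

Lemma bigcap_In_nil : \bigcap_(i in [set i | List.In i [::]]) F i = setT.
Proof. by apply/seteqP; split => w //= _ i. Qed.

Lemma bigcap_In_cons a s : \bigcap_(i in [set i | List.In i (a :: s)]) F i =
  F a `&` \bigcap_(i in [set i | List.In i s]) F i.
Proof.
apply/seteqP; split => w /=.
  by move=> H; split; [apply: H; left|move=> i Hi; apply: H; right].
by case=> Ha Hs i [<-|Hi] //; apply: Hs.
Qed.

Lemma bigcap_In_big s : \bigcap_(i in [set i | List.In i s]) F i =
  \big[setI/setT]_(i <- s) F i.
Proof.
by elim: s => [|a s IH]; rewrite ?bigcap_In_nil ?big_nil // bigcap_In_cons IH big_cons.
Qed.

End bigcap_List_In.

Lemma in_bigsetU (T : Type) (I : eqType) (s : seq I) (F : I -> set T) i w :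
  i \in s -> F i w -> (\big[setU/set0]_(j <- s) F j) w.
Proof.
elim: s => [|a s IH] //; rewrite in_cons big_cons => /orP[/eqP <-|si] Fw.
  by left.
by right; exact: IH.
Qed.

Lemma in_bigsetI (T : Type) (I : eqType) (s : seq I) (F : I -> set T) w :
  (forall i, i \in s -> F i w) -> (\big[setI/setT]_(i <- s) F i) w.
Proof.
elim: s => [|a s IH] Fw; first by rewrite big_nil.
rewrite big_cons; split; first by apply: Fw; rewrite mem_head.
by apply: IH => i si; apply: Fw; rewrite in_cons si orbT.
Qed.

Definition plabel_code (V : finType) (l : plabel V) : (V + V) + {set V} :=
  match l with Recov x => inl (inl x) | Onset x => inl (inr x) | Trans e => inr e end.
Definition plabel_decode (V : finType) (c : (V + V) + {set V}) : plabel V :=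
  match c with inl (inl x) => Recov x | inl (inr x) => Onset x | inr e => Trans e end.
Lemma plabel_codeK (V : finType) : cancel (@plabel_code V) (@plabel_decode V).
Proof. by case. Qed.
HB.instance Definition _ (V : finType) :=
  Equality.copy (plabel V) (can_type (@plabel_codeK V)).

Lemma sume_le_size_mul (R : realType) (I : Type) (s : seq I) (f : I -> \bar R)
    (c : R) : (forall i, (f i <= c%:E)%E) ->
  (\sum_(i <- s) f i <= ((size s)%:R * c)%:E)%E.
Proof.
move=> H; elim: s => [|a s IH]; first by rewrite big_nil mul0r.
by rewrite big_cons /= -natr1 mulrDl mul1r addrC EFinD; exact: leeD.
Qed.

Section measure_sums.
Context d (T : measurableType d) (R : realType).

Lemma measurable_preimage (f : T -> R) (B : set R) :
  measurable_fun setT f -> measurable B -> measurable (f @^-1` B).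
Proof. by move=> mf mB; rewrite -[_ @^-1` _]setTI; exact: mf. Qed.

Variable P : probability T R.

Lemma probability_setU_le (A B : set T) : measurable A -> measurable B ->
  (P (A `|` B) <= P A + P B)%E.
Proof. exact: measureU2. Qed.

Lemma probability_bigsetU_le (I : Type) (s : seq I) (F : I -> set T) :
  (forall i, measurable (F i)) ->
  (P (\big[setU/set0]_(i <- s) F i) <= \sum_(i <- s) P (F i))%E.
Proof.
move=> mF; elim: s => [|a s IH]; first by rewrite !big_nil measure0.
rewrite !big_cons; apply: le_trans (probability_setU_le _ _) _ => //.
  exact: bigsetU_measurable.
exact: leeD.
Qed.

Lemma probability_bigsetU_le_size (I : Type) (s : seq I) (F : I -> set T) (c : R) :
  (forall i, measurable (F i)) -> (forall i, (P (F i) <= c%:E)%E) ->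
  (P (\big[setU/set0]_(i <- s) F i) <= ((size s)%:R * c)%:E)%E.
Proof.
move=> mF Fc; apply: le_trans (probability_bigsetU_le _ mF) _.
exact: sume_le_size_mul.
Qed.

Lemma probability_setC_ge (A : set T) (x : R) :
  measurable A -> (P A <= x%:E)%E -> ((1 - x)%:E <= P (~` A))%E.
Proof. by move=> mA PA; rewrite probability_setC // EFinB leeB. Qed.

End measure_sums.

Lemma prode_cst (R : realType) (I : Type) (s : seq I) (c : R) :
  (\prod_(i <- s) c%:E)%E = (c ^+ size s)%:E.
Proof.
elim: s => [|a s IH]; first by rewrite big_nil expr0.
by rewrite big_cons IH /= exprS EFinM.
Qed.

Section partial_sums.
Variables (R : realType) (f : nat -> R).

Lemma psum_crossing (t : R) M : 0 <= t -> t < \sum_(i < M) f i ->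
  exists2 m, (m < M)%N & \sum_(i < m) f i <= t < \sum_(i < m.+1) f i.
Proof.
move=> t0; elim: M => [|M IH]; first by rewrite big_ord0; lra.
case: (ltP t (\sum_(i < M) f i)) => [/IH [m mM hm] _|tM tM1].
  by exists m => //; exact: ltnW.
by exists M; rewrite ?tM.
Qed.

Hypothesis f_ge0 : forall i, 0 <= f i.

Lemma psum_le_mono k k' : (k <= k')%N -> \sum_(i < k) f i <= \sum_(i < k') f i.
Proof.
move=> kk; rewrite -!(big_mkord xpredT) /index_iota !subn0 -(subnKC kk) iotaD.
by rewrite big_cat /= lerDl sumr_ge0.
Qed.

Lemma psum_term_le n k : (n < k)%N -> f n <= \sum_(i < k) f i.
Proof.
move=> nk; rewrite (bigD1 (Ordinal nk)) //= lerDl.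
by apply: sumr_ge0.
Qed.

Lemma psum_blocks_ge (c : R) L B :
  (forall b, (b < B)%N -> exists2 m, (b * L <= m < b * L + L)%N & c < f m) ->
  B%:R * c <= \sum_(i < B * L) f i.
Proof.
elim: B => [|B IH] H; first by rewrite mul0r big_ord0.
rewrite mulSnr big_split_ord /= -natr1 mulrDl mul1r.
apply: lerD; first by apply: IH => b bB; apply: H; exact: ltnW.
have [m /andP[m1 m2] fm] := H B (ltnSn B).
have mL : (m - B * L < L)%N by lia.
apply: le_trans (ltW fm) _; rewrite (bigD1 (Ordinal mL)) //= subnKC //.
by rewrite lerDl sumr_ge0.
Qed.

Lemma psum_separated (dl : R) N k j : (forall n, (n <= N)%N -> dl < f n) ->
  (j <= N)%N -> \sum_(i < k.+1) f i < \sum_(i < j.+1) f i ->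
  \sum_(i < k.+1) f i + dl < \sum_(i < j.+1) f i.
Proof.
move=> fN jN kj; have lt_kj : (k < j)%N.
  rewrite ltnNge; apply/negP => jk; have := @psum_le_mono j.+1 k.+1 jk.
  by rewrite leNgt kj.
rewrite [ltRHS]big_ord_recr /=; apply: ler_ltD; first exact: psum_le_mono.
exact: fN.
Qed.

End partial_sums.

Definition cell (R : realType) (a dl : R) (m : nat) : set R :=
  `[a + m%:R * dl, a + m.+1%:R * dl[.

Definition cell2 (R : realType) (a dl : R) (m : nat) : set R :=
  `[a + m%:R * dl, a + m.+2%:R * dl].

Definition cell_count (R : realType) (a b dl : R) := (Num.truncn ((b - a) / dl)).+1.

Section cells.
Variables (R : realType) (a dl : R).
Hypothesis dl_gt0 : 0 < dl.

Lemma cell_index (b W : R) : a <= W -> W <= b ->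
  exists2 m, (m < cell_count a b dl)%N & cell a dl m W.
Proof.
move=> aW Wb; have v0 : 0 <= (W - a) / dl by rewrite divr_ge0 ?subr_ge0 // ltW.
exists (Num.truncn ((W - a) / dl)).
  by rewrite ltnS le_truncn // ler_pM2r ?invr_gt0 // lerB.
have /andP[h1 h2] := truncn_itv v0; move: h1 h2.
rewrite ler_pdivlMr // ltr_pdivrMr // /cell /= in_itv /= => h1 h2.
by apply/andP; split; lra.
Qed.

Lemma cell2_of_cell m (W g : R) : cell a dl m W -> W < g -> g <= W + dl ->
  cell2 a dl m g.
Proof.
rewrite /cell /cell2 /= !in_itv /= -!natr1 !mulrDl !mul1r => /andP[h1 h2] h3 h4.
by apply/andP; split; lra.
Qed.

Lemma trivIset_cell (T : Type) (f : T -> R) :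
  trivIset setT (fun m => f @^-1` cell a dl m).
Proof.
have key p q w : (p < q)%N -> f w < a + p.+1%:R * dl -> a + q%:R * dl <= f w -> False.
  move=> pq h1 h2; have : p.+1%:R * dl <= q%:R * dl by rewrite ler_pM2r // ler_nat.
  lra.
move=> m n _ _ [w []]; rewrite /cell /= !in_itv /= => /andP[h1 h2] /andP[h3 h4].
by case: (ltngtP m n) => // mn; [case: (key _ _ _ mn h2 h3)|case: (key _ _ _ mn h4 h1)].
Qed.

End cells.

Lemma cells_of_window (R : realType) (T dl t S g : R) : 0 < T -> 0 < dl ->
  dl <= 1 -> t <= T -> 0 <= S -> 0 <= g -> t < S + g -> S + g <= t + dl ->
  exists2 m, (m < cell_count (- (T + 1)) (T + 1) dl)%N &
    cell (- (T + 1)) dl m (t - S) /\ cell2 (- (T + 1)) dl m g.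
Proof.
move=> T0 dl0 dl1 tT S0 g0 ts st.
have lo : - (T + 1) <= t - S by lra.
have hi : t - S <= T + 1 by lra.
have [m mM lag_m] := cell_index dl0 lo hi.
by exists m => //; split => //; apply: cell2_of_cell lag_m _ _; lra.
Qed.

Section graphical_representation.
Variables (R : realType) (V : finType) (Ed : {set {set V}}) (lam tau : R)
  (d : measure_display) (Omega : measurableType d) (P : probability Omega R)
  (G : graphical_rep P Ed lam tau).

Definition gap_at (i : plabel V * nat) := gap G i.1 i.2.

Definition valid_at (i : plabel V * nat) := plabel_valid Ed i.1.

Lemma measurable_gap_preimage l n B : plabel_valid Ed l -> measurable B ->
  measurable (gap G l n @^-1` B).
Proof. by move=> vl; apply: measurable_preimage; exact: gap_measurable. Qed.

Definition cylinder (s : seq (plabel V * nat)) (B : plabel V * nat -> set R) :=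
  \bigcap_(i in [set i | List.In i s]) gap_at i @^-1` B i.

Definition cylinders s : set (set Omega) :=
  [set cylinder s B | B in [set B | forall i, measurable (B i)]].

Lemma measurable_cylinder s B : (forall i, List.In i s -> valid_at i) ->
  (forall i, measurable (B i)) -> measurable (cylinder s B).
Proof.
elim: s => [|a s IH] vs mB; first by rewrite /cylinder bigcap_In_nil.
rewrite /cylinder bigcap_In_cons; apply: measurableI.
  by apply: measurable_gap_preimage => //; apply: vs; left.
by apply: IH => // i si; apply: vs; right.
Qed.

Lemma P_cylinder s B : uniq s -> (forall i, i \in s -> valid_at i) ->
  (forall i, measurable (B i)) ->
  P (cylinder s B) = (\prod_(i <- s) P (gap_at i @^-1` B i))%E.
Proof.
move=> us vs mB; apply: (gap_indep G (uniq_NoDup us)) => i /In_mem si.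
by split; [exact: vs|exact: mB].
Qed.

Lemma P_cylinder_setI s i0 B B0 : uniq (i0 :: s) ->
  (forall i, i \in i0 :: s -> valid_at i) ->
  (forall i, measurable (B i)) -> measurable B0 ->
  P (cylinder s B `&` gap_at i0 @^-1` B0) =
  (P (cylinder s B) * P (gap_at i0 @^-1` B0))%E.
Proof.
move=> us vs mB mB0; pose B' i := if i == i0 then B0 else B i.
have B'E i : i \in s -> B' i = B i.
  by rewrite /B'; case: eqP => // -> i0s; move: us; rewrite /= i0s.
have -> : cylinder s B `&` gap_at i0 @^-1` B0 = cylinder (i0 :: s) B'.
  rewrite /cylinder bigcap_In_cons setIC; congr (_ `&` _); first by rewrite /B' eqxx.
  by apply: eq_bigcapr => i /In_mem /B'E ->.
rewrite P_cylinder // => [|i]; last by rewrite /B'; case: eqP.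
rewrite big_cons {1}/B' eqxx muleC P_cylinder //; last 2 first.
- by move: us => /andP[].
- by move=> i si; apply: vs; rewrite in_cons si orbT.
congr (_ * _)%E; rewrite big_seq_cond [RHS]big_seq_cond.
by apply: eq_bigr => i /andP[/B'E -> _].
Qed.

Lemma cylinder_setT s : cylinder s (fun=> setT) = setT.
Proof. by apply/seteqP; split => w //= _ i. Qed.

Lemma cylinder_setI s B B' :
  cylinder s B `&` cylinder s B' = cylinder s (fun i => B i `&` B' i).
Proof.
by rewrite /cylinder -bigcapI; apply: eq_bigcapr => i _; rewrite preimage_setI.
Qed.

Lemma P_setI_gap_indep s i0 B0 A : uniq (i0 :: s) ->
  (forall i, i \in i0 :: s -> valid_at i) -> measurable B0 ->
  <<s cylinders s >> A ->
  P (A `&` gap_at i0 @^-1` B0) = (P A * P (gap_at i0 @^-1` B0))%E.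
Proof.
move=> us vs mB0 sA.
have vs' i : List.In i s -> valid_at i.
  by move/In_mem => si; apply: vs; rewrite in_cons si orbT.
have mC : measurable (gap_at i0 @^-1` B0).
  by apply: measurable_gap_preimage => //; apply: vs; rewrite mem_head.
have C0 : (0 <= fine (P (gap_at i0 @^-1` B0)))%R by exact: fine_ge0.
pose m1 := mrestr P mC; pose m2 := mscale (NngNum C0) P.
suff : m1 A = m2 A by rewrite /m1 /m2 /mrestr /mscale /= fineK ?fin_num_measure // muleC.
apply: (@g_sigma_algebra_measure_unique _ _ _ (cylinders s) _ (fun=> setT)) => //.
- by move=> _ [B mB <-]; exact: measurable_cylinder.
- by move=> _; exists (fun=> setT); rewrite ?cylinder_setT.
- by apply/seteqP; split => w // _; exists 0%N.
- move=> _ _ [B mB <-] [B' mB' <-]; rewrite cylinder_setI.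
  by exists (fun i => B i `&` B' i) => // i; exact: measurableI.
- move=> _ [B mB <-].
  change (P (cylinder s B `&` gap_at i0 @^-1` B0) =
    ((fine (P (gap_at i0 @^-1` B0)))%:E * P (cylinder s B))%E).
  by rewrite fineK ?fin_num_measure // P_cylinder_setI // muleC.
- move=> _; apply: le_lt_trans (probability_le1 P _) _; rewrite ?ltry //.
  exact: measurableI.
Qed.

Lemma measurable_gap_at_cylinders s i : List.In i s ->
  measurable_fun setT (gap_at i : g_sigma_algebraType (cylinders s) -> R).
Proof.
move=> si _ B mB; rewrite setTI; apply: sub_sigma_algebra.
exists (fun j => if j == i then B else setT) => [j|]; first by case: eqP.
apply/seteqP; split => w /=; last by move=> Bw j _; case: eqP => [->|].
by move=> /(_ i si); rewrite eqxx.
Qed.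

Lemma measurable_sum_gap_cylinders s r : {subset r <= s} ->
  measurable_fun setT
    (fun w : g_sigma_algebraType (cylinders s) => \sum_(i <- r) gap_at i w).
Proof.
elim: r => [|a r IH] rs.
  by under eq_fun do rewrite big_nil; exact: measurable_cst.
under eq_fun do rewrite big_cons; apply: measurable_funD.
  by apply: measurable_gap_at_cylinders; rewrite In_mem rs // mem_head.
by apply: IH => i ri; rewrite rs // in_cons ri orbT.
Qed.

Definition onsets_upto (x : V) n : seq (plabel V * nat) :=
  [seq (Onset x, i) | i <- iota 0 n].

Lemma mem_onsets_upto x n l m :
  ((l, m) \in onsets_upto x n) = (l == Onset x) && (m < n)%N.
Proof.
apply/mapP/andP => [[m' + [-> ->]]|[/eqP -> mn]].
  by rewrite mem_iota => /andP[_ ?].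
by exists m; rewrite ?mem_iota.
Qed.

Lemma onsets_upto_uniq x n : uniq (onsets_upto x n).
Proof. by rewrite map_inj_uniq ?iota_uniq // => ? ? []. Qed.

Lemma sum_onsets_upto x n w :
  \sum_(i <- onsets_upto x n) gap_at i w = \sum_(i < n) gap G (Onset x) i w.
Proof.
by rewrite big_map -(big_mkord xpredT (fun i => gap G (Onset x) i w)) /index_iota subn0.
Qed.

Lemma eq_Onset (x y : V) : (Onset x == Onset y) = (x == y).
Proof. by apply/eqP/eqP => [[]|->]. Qed.

Definition onset_lag x k y j w :=
  arrival G (Onset x) k w - \sum_(i < j) gap G (Onset y) i w.

Lemma measurable_onset_lag x k y j : measurable_fun setT (onset_lag x k y j).
Proof.
by apply: measurable_funB; apply: measurable_sum => i; by apply: gap_measurable.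
Qed.

Definition close_onsets x k y j a dl M :=
  \big[setU/set0]_(m < M) (onset_lag x k y j @^-1` cell a dl m `&`
     gap G (Onset y) j @^-1` cell2 a dl m).

Lemma measurable_close_onsets x k y j a dl M :
  measurable (close_onsets x k y j a dl M).
Proof.
apply: bigsetU_measurable => m _.
apply: measurableI; apply: measurable_preimage; rewrite /cell /cell2 //.
  exact: measurable_onset_lag.
by apply: gap_measurable.
Qed.

Definition lag_indices x k y j := onsets_upto x k.+1 ++ onsets_upto y j.

Lemma uniq_lag_indices x k y j : x != y ->
  uniq ((Onset y, j) :: lag_indices x k y j).
Proof.
move=> xy.
rewrite cons_uniq mem_cat !mem_onsets_upto eq_Onset eq_sym (negbTE xy) ltnn !andbF.
rewrite cat_uniq !onsets_upto_uniq andbT; apply/hasPn => -[l m].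
by rewrite !mem_onsets_upto => /andP[/eqP -> _]; rewrite eq_Onset eq_sym (negbTE xy).
Qed.

Lemma valid_lag_indices x k y j i :
  i \in (Onset y, j) :: lag_indices x k y j -> valid_at i.
Proof.
case: i => l m; rewrite in_cons mem_cat !mem_onsets_upto.
by case/or3P => [/eqP[-> _]|/andP[/eqP-> _]|/andP[/eqP-> _]].
Qed.

Lemma measurable_onset_lag_cylinders x k y j : measurable_fun setT
  (onset_lag x k y j : g_sigma_algebraType (cylinders (lag_indices x k y j)) -> R).
Proof.
have -> : onset_lag x k y j = fun w =>
    \sum_(i <- onsets_upto x k.+1) gap_at i w - \sum_(i <- onsets_upto y j) gap_at i w.
  by apply/funext => w; rewrite !sum_onsets_upto.
by apply: measurable_funB; apply: measurable_sum_gap_cylinders => i ri;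
  rewrite mem_cat ri ?orbT.
Qed.

(* Instead of conditioning on the lag, split its range into cells of width [dl]:
   on each cell, the last gap is independent of the lag and must fall in an
   interval of length [2 dl]. *)
Lemma P_close_onsets_le x k y j a dl M : x != y -> 0 < dl ->
  (P (close_onsets x k y j a dl M) <= (2 * dl)%:E)%E.
Proof.
move=> xy dl0; have us := uniq_lag_indices k j xy.
have lag_cyl m : <<s cylinders (lag_indices x k y j) >>
    (onset_lag x k y j @^-1` cell a dl m).
  have := @measurable_onset_lag_cylinders x k y j measurableT _
    (measurable_itv `[a + m%:R * dl, a + m.+1%:R * dl[).
  by rewrite setTI.
have mcell m : measurable (onset_lag x k y j @^-1` cell a dl m).
  by apply: measurable_preimage; [exact: measurable_onset_lag|exact: measurable_itv].
apply: le_trans (probability_bigsetU_le _ _ _) _ => [m|].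
  apply: measurableI (mcell m) _.
  by apply: measurable_preimage; [apply: gap_measurable|exact: measurable_itv].
apply: (@le_trans _ _
  (\sum_(m < M) P (onset_lag x k y j @^-1` cell a dl m) * (2 * dl)%:E)%E).
  apply: lee_sum => m _.
  have mcell2 : measurable (cell2 a dl m) by exact: measurable_itv.
  have := P_setI_gap_indep us (@valid_lag_indices x k y j) mcell2 (lag_cyl m).
  rewrite /gap_at /= => ->; rewrite lee_wpmul2l // (gap_law G j (l := Onset y)) //.
  apply: le_trans (exponential_prob_itv_le _ _) _ => //.
    by rewrite lerD2l ler_wpM2r ?ler_nat ?(ltW dl0) // (leq_trans (leqnSn m)).
  by rewrite lee_fin /= mul1r -!natr1 !mulrDl !mul1r; lra.
rewrite -ge0_sume_distrl //.
rewrite -(@measure_bigsetU _ _ _ P _ mcell (@trivIset_cell _ a dl dl0 _ (onset_lag x k y j))).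
rewrite -[leRHS]mul1e lee_wpmul2r //; first by rewrite lee_fin; lra.
by apply: probability_le1; exact: bigsetU_measurable.
Qed.

Lemma P_gap_lt0 l n : plabel_valid Ed l -> P (gap G l n @^-1` `]-oo, 0[) = 0%E.
Proof. by move=> vl; rewrite (gap_law G n vl) // exponential_prob_itvNy0. Qed.

Lemma P_bigsetI_gap l ns B : plabel_valid Ed l -> uniq ns -> measurable B ->
  P (\big[setI/setT]_(n <- ns) gap G l n @^-1` B) =
  (\prod_(n <- ns) P (gap G l n @^-1` B))%E.
Proof.
move=> vl uns mB.
have -> : \big[setI/setT]_(n <- ns) gap G l n @^-1` B =
    cylinder [seq (l, n) | n <- ns] (fun=> B).
  by rewrite /cylinder bigcap_In_big big_map.
by rewrite P_cylinder ?big_map // ?map_inj_uniq // => [? ? []|i /mapP[n _ ->]].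
Qed.

(* The exponential law makes the gaps nonnegative only almost surely. *)
Definition negative_gap := \bigcup_n \big[setU/set0]_(z <- enum V)
  (gap G (Onset z) n @^-1` `]-oo, 0[ `|` gap G (Recov z) n @^-1` `]-oo, 0[).

Lemma measurable_negative_gap : measurable negative_gap.
Proof.
apply: bigcupT_measurable => n; apply: bigsetU_measurable => z _.
by apply: measurableU; apply: measurable_gap_preimage.
Qed.

Lemma P_negative_gap : P negative_gap = 0%E.
Proof.
have mU l n : plabel_valid Ed l -> measurable (gap G l n @^-1` `]-oo, 0[).
  by move=> vl; exact: measurable_gap_preimage.
apply/eqP; rewrite eq_le measure_ge0 andbT.
apply: le_trans (le_mu_bigcup _ _ _) _ => [n||].
- by apply: bigsetU_measurable => z _; apply: measurableU; apply: mU.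
- exact: measurable_negative_gap.
rewrite eseries0 // => n _ _; apply/eqP; rewrite eq_le measure_ge0 andbT.
apply: le_trans (@probability_bigsetU_le_size _ _ _ P _ _ _ 0 _ _) _; last by rewrite mulr0.
  by move=> z; apply: measurableU; apply: mU.
move=> z; apply: le_trans (probability_setU_le _ (mU (Onset z) n I) (mU (Recov z) n I)) _.
by rewrite (@P_gap_lt0 (Onset z) n I) (@P_gap_lt0 (Recov z) n I) adde0.
Qed.

Definition onset_gaps_le (h : R) N z :=
  \big[setI/setT]_(n <- iota 0 N.+1) gap G (Onset z) n @^-1` `]-oo, h].

Definition some_onset_gap_le (dl : R) N z :=
  \big[setU/set0]_(n <- iota 0 N.+1) gap G (Onset z) n @^-1` `]-oo, dl].

Definition some_recovery_gap_gt (dl : R) M z :=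
  \big[setU/set0]_(m <- iota 0 M) gap G (Recov z) m @^-1` `]dl, +oo[.

Definition recovery_gaps_le (c : R) L z b :=
  \big[setI/setT]_(m <- iota (b * L) L) gap G (Recov z) m @^-1` `]-oo, c].

Definition site_bad (T dl c : R) N K L z :=
  onset_gaps_le (T + 1) N z `|` some_onset_gap_le dl N z
  `|` some_recovery_gap_gt dl (K.+1 * L) z
  `|` \big[setU/set0]_(b <- iota 0 K.+1) recovery_gaps_le c L z b.

Definition close_onset_pair (T dl : R) N :=
  \big[setU/set0]_(x <- enum V) \big[setU/set0]_(y <- enum V)
  \big[setU/set0]_(k <- iota 0 N) \big[setU/set0]_(j <- iota 0 N)
  (if x == y then set0
   else close_onsets x k y j (- (T + 1)) dl (cell_count (- (T + 1)) (T + 1) dl)).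

Definition bad_event (T dl c : R) N K L :=
  negative_gap `|` \big[setU/set0]_(z <- enum V) site_bad T dl c N K L z
  `|` close_onset_pair T dl N.

Lemma measurable_onset_gaps_le h N z : measurable (onset_gaps_le h N z).
Proof. by apply: bigsetI_measurable => n _; exact: measurable_gap_preimage. Qed.

Lemma measurable_some_onset_gap_le dl N z : measurable (some_onset_gap_le dl N z).
Proof. by apply: bigsetU_measurable => n _; exact: measurable_gap_preimage. Qed.

Lemma measurable_some_recovery_gap_gt dl M z :
  measurable (some_recovery_gap_gt dl M z).
Proof. by apply: bigsetU_measurable => n _; exact: measurable_gap_preimage. Qed.

Lemma measurable_recovery_blocks_le c L z K :
  measurable (\big[setU/set0]_(b <- iota 0 K) recovery_gaps_le c L z b).
Proof.
apply: bigsetU_measurable => b _; apply: bigsetI_measurable => n _.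
exact: measurable_gap_preimage.
Qed.

Lemma measurable_site_bad T dl c N K L z : measurable (site_bad T dl c N K L z).
Proof.
repeat apply: measurableU; by [exact: measurable_onset_gaps_le|
  exact: measurable_some_onset_gap_le|exact: measurable_some_recovery_gap_gt|
  exact: measurable_recovery_blocks_le].
Qed.

Lemma measurable_close_onset_pair T dl N : measurable (close_onset_pair T dl N).
Proof.
do 4 apply: bigsetU_measurable => ? _.
by case: ifP => _; [exact: measurable0|exact: measurable_close_onsets].
Qed.

Lemma measurable_bad_event T dl c N K L : measurable (bad_event T dl c N K L).
Proof.
apply: measurableU; last exact: measurable_close_onset_pair.
apply: measurableU; first exact: measurable_negative_gap.
by apply: bigsetU_measurable => z _; exact: measurable_site_bad.
Qed.

Lemma P_onset_gap_le z n (a : R) : 0 < a ->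
  P (gap G (Onset z) n @^-1` `]-oo, a]) = (1 - (expR (- a))%:E)%E.
Proof.
by move=> a0; rewrite (gap_law G n (l := Onset z)) //= exponential_prob_itvNyc // mulN1r.
Qed.

Section positive_rate.
Hypothesis tau_gt0 : 0 < tau.

Lemma P_recovery_gap_le z n (a : R) : 0 < a ->
  P (gap G (Recov z) n @^-1` `]-oo, a]) = (1 - (expR (- tau * a))%:E)%E.
Proof. by move=> a0; rewrite (gap_law G n (l := Recov z)) //= exponential_prob_itvNyc. Qed.

Lemma P_recovery_gap_gt z n (a : R) : 0 < a ->
  P (gap G (Recov z) n @^-1` `]a, +oo[) = (expR (- tau * a))%:E.
Proof. by move=> a0; rewrite (gap_law G n (l := Recov z)) //= exponential_prob_itvcy. Qed.

Lemma P_some_recovery_gap_gt (dl : R) M z : 0 < dl ->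
  (P (some_recovery_gap_gt dl M z) <= (M%:R * expR (- tau * dl))%:E)%E.
Proof.
move=> dl0; rewrite -[X in X%:R](size_iota 0 M).
apply: probability_bigsetU_le_size => m; first exact: measurable_gap_preimage.
by rewrite P_recovery_gap_gt.
Qed.

Lemma P_recovery_gaps_le (c : R) L z b : 0 < c ->
  P (recovery_gaps_le c L z b) = ((1 - expR (- tau * c)) ^+ L)%:E.
Proof.
move=> c0; rewrite /recovery_gaps_le P_bigsetI_gap ?iota_uniq //.
by under eq_bigr do rewrite P_recovery_gap_le //; rewrite -EFinB prode_cst size_iota.
Qed.

End positive_rate.

Lemma P_onset_gaps_le (h : R) N z : 0 < h ->
  P (onset_gaps_le h N z) = ((1 - expR (- h)) ^+ N.+1)%:E.
Proof.
move=> h0; rewrite /onset_gaps_le P_bigsetI_gap ?iota_uniq //.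
by under eq_bigr do rewrite P_onset_gap_le //; rewrite -EFinB prode_cst size_iota.
Qed.

Lemma P_some_onset_gap_le (dl : R) N z : 0 < dl ->
  (P (some_onset_gap_le dl N z) <= (N.+1%:R * dl)%:E)%E.
Proof.
move=> dl0; rewrite -[X in X%:R](size_iota 0 N.+1).
apply: probability_bigsetU_le_size => n; first exact: measurable_gap_preimage.
rewrite P_onset_gap_le // -EFinB lee_fin; have := expR_ge1Dx (- dl); lra.
Qed.

Lemma P_site_bad_le (T dl c : R) N K L z : 0 < tau -> 0 < T -> 0 < dl -> 0 < c ->
  (P (site_bad T dl c N K L z) <=
   ((1 - expR (- (T + 1))) ^+ N.+1 + N.+1%:R * dl
    + (K.+1 * L)%:R * expR (- tau * dl)
    + K.+1%:R * (1 - expR (- tau * c)) ^+ L)%:E)%E.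
Proof.
move=> tau0 T0 dl0 c0; rewrite /site_bad !EFinD.
apply: le_trans (probability_setU_le _ _ _) _; last apply: leeD.
- by repeat apply: measurableU; [exact: measurable_onset_gaps_le|
    exact: measurable_some_onset_gap_le|exact: measurable_some_recovery_gap_gt].
- exact: measurable_recovery_blocks_le.
- apply: le_trans (probability_setU_le _ _ _) _; last apply: leeD.
  + by apply: measurableU; [exact: measurable_onset_gaps_le|
      exact: measurable_some_onset_gap_le].
  + exact: measurable_some_recovery_gap_gt.
  + apply: le_trans (probability_setU_le _ _ _) _; last apply: leeD.
    * exact: measurable_onset_gaps_le.
    * exact: measurable_some_onset_gap_le.
    * by rewrite P_onset_gaps_le //; lra.
    * exact: P_some_onset_gap_le.
  + exact: P_some_recovery_gap_gt.
- rewrite -[X in X%:R * _](size_iota 0 K.+1).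
  apply: probability_bigsetU_le_size => b.
    by apply: bigsetI_measurable => n _; exact: measurable_gap_preimage.
  by rewrite P_recovery_gaps_le.
Qed.

Lemma P_close_onset_pair_le (T dl : R) N : 0 < dl ->
  (P (close_onset_pair T dl N) <=
   (#|V|%:R * (#|V|%:R * (N%:R * (N%:R * (2 * dl)))))%:E)%E.
Proof.
have mpair x y k j (a : R) M : measurable
    (if x == y then set0 else close_onsets x k y j a dl M).
  by case: ifP => _; [exact: measurable0|exact: measurable_close_onsets].
move=> dl0; rewrite cardT -[X in X%:R * (_ * (2 * dl))](size_iota 0 N).
apply: probability_bigsetU_le_size => [x|x].
  by do 3 apply: bigsetU_measurable => ? _.
apply: probability_bigsetU_le_size => [y|y].
  by do 2 apply: bigsetU_measurable => ? _.
apply: probability_bigsetU_le_size => [k|k].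
  by apply: bigsetU_measurable => ? _.
rewrite -[X in X%:R * (2 * dl)](size_iota 0 N).
apply: probability_bigsetU_le_size => // j.
case: ifPn => xy; last exact: P_close_onsets_le.
by rewrite measure0 lee_fin; lra.
Qed.

Lemma P_bad_event_le (T dl c : R) N K L : 0 < tau -> 0 < T -> 0 < dl -> 0 < c ->
  (P (bad_event T dl c N K L) <=
   (#|V|%:R * ((1 - expR (- (T + 1))) ^+ N.+1 + N.+1%:R * dl
      + (K.+1 * L)%:R * expR (- tau * dl)
      + K.+1%:R * (1 - expR (- tau * c)) ^+ L)
    + #|V|%:R * (#|V|%:R * (N%:R * (N%:R * (2 * dl)))))%:E)%E.
Proof.
move=> tau0 T0 dl0 c0; rewrite /bad_event EFinD.
apply: le_trans (probability_setU_le _ _ _) _; last apply: leeD.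
- apply: measurableU; first exact: measurable_negative_gap.
  by apply: bigsetU_measurable => z _; exact: measurable_site_bad.
- exact: measurable_close_onset_pair.
- apply: le_trans (probability_setU_le _ _ _) _.
  + exact: measurable_negative_gap.
  + by apply: bigsetU_measurable => z _; exact: measurable_site_bad.
  rewrite P_negative_gap add0e cardT; apply: probability_bigsetU_le_size => z.
    exact: measurable_site_bad.
  exact: P_site_bad_le.
- exact: P_close_onset_pair_le.
Qed.

Section not_bad.
Variables (T dl c : R) (N K L : nat) (w : Omega).
Hypotheses (T_gt0 : 0 < T) (dl_gt0 : 0 < dl) (dl_le1 : dl <= 1)
  (TKc : T < K.+1%:R * c) (not_bad : ~ bad_event T dl c N K L w).

Let not_site_bad z : ~ site_bad T dl c N K L z w.
Proof.
by move=> bz; apply: not_bad; left; right; apply: (in_bigsetU (i := z)); rewrite ?mem_enum.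
Qed.

Lemma onset_gap_ge0 z n : 0 <= gap G (Onset z) n w.
Proof.
rewrite leNgt; apply/negP => neg; apply: not_bad; do 2 left; exists n => //.
by apply: (in_bigsetU (i := z)); rewrite ?mem_enum //; left; rewrite /= in_itv /= neg.
Qed.

Lemma recovery_gap_ge0 z n : 0 <= gap G (Recov z) n w.
Proof.
rewrite leNgt; apply/negP => neg; apply: not_bad; do 2 left; exists n => //.
by apply: (in_bigsetU (i := z)); rewrite ?mem_enum //; right; rewrite /= in_itv /= neg.
Qed.

Lemma arrival_onset_late z : T + 1 < arrival G (Onset z) N w.
Proof.
rewrite ltNge; apply/negP => early; apply: (@not_site_bad z); do 3 left.
apply: in_bigsetI => n; rewrite mem_iota add0n => /andP[_ nN]; rewrite /= in_itv /=.
exact: le_trans (psum_term_le (onset_gap_ge0 z) nN) early.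
Qed.

Lemma onset_index_lt z j : arrival G (Onset z) j w <= T + 1 -> (j < N)%N.
Proof.
move=> early; rewrite ltnNge; apply/negP => Nj.
have := psum_le_mono (onset_gap_ge0 z) (Nj : (N.+1 <= j.+1)%N).
by rewrite leNgt (le_lt_trans early (arrival_onset_late z)).
Qed.

Lemma onset_gap_gt z n : (n <= N)%N -> dl < gap G (Onset z) n w.
Proof.
move=> nN; rewrite ltNge; apply/negP => short; apply: (@not_site_bad z).
by do 2 left; right; apply: (in_bigsetU (i := n)); rewrite ?mem_iota //= in_itv /= short.
Qed.

Lemma recovery_gap_le z m : (m < K.+1 * L)%N -> gap G (Recov z) m w <= dl.
Proof.
move=> mM; rewrite leNgt; apply/negP => long; apply: (@not_site_bad z).
by left; right; apply: (in_bigsetU (i := m)); rewrite ?mem_iota //= in_itv /= long.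
Qed.

Lemma recovery_block_gap z b : (b < K.+1)%N ->
  exists2 m, (b * L <= m < b * L + L)%N & c < gap G (Recov z) m w.
Proof.
move=> bK; case: (pselect (exists2 m, (b * L <= m < b * L + L)%N &
  c < gap G (Recov z) m w)) => // none; exfalso.
apply: (@not_site_bad z); right; apply: (in_bigsetU (i := b)); rewrite ?mem_iota //.
apply: in_bigsetI => m; rewrite mem_iota /= in_itv /= leNgt => mb.
by apply/negP => cm; apply: none; exists m.
Qed.

Lemma recovery_soon z t : 0 <= t -> t <= T ->
  exists m, t < arrival G (Recov z) m w <= t + dl.
Proof.
move=> t0 tT; have passed : t < \sum_(i < K.+1 * L) gap G (Recov z) i w.
  apply: le_lt_trans tT (lt_le_trans TKc _).
  exact: (psum_blocks_ge (recovery_gap_ge0 z) (recovery_block_gap z)).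
have [m mM /andP[tm tm1]] :=
  psum_crossing (f := fun i => gap G (Recov z) i w) t0 passed.
exists m; rewrite tm1 /= /arrival big_ord_recr /=.
by have := recovery_gap_le z mM; lra.
Qed.

Lemma onsets_apart x y k j : arrival G (Onset x) k w <= T ->
  arrival G (Onset x) k w < arrival G (Onset y) j w ->
  arrival G (Onset x) k w + dl < arrival G (Onset y) j w.
Proof.
move=> tT ts; rewrite ltNge; apply/negP => close.
have kN : (k < N)%N by apply: (@onset_index_lt x); apply: le_trans tT _; lra.
have jN : (j < N)%N.
  by apply: (@onset_index_lt y); apply: le_trans close _; exact: lerD.
have [exy|xy] := eqVneq x y.
  move: ts close; rewrite -exy => ts.
  by rewrite leNgt (psum_separated (onset_gap_ge0 x) (@onset_gap_gt x) (ltnW jN) ts).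
apply: not_bad; right.
apply: (in_bigsetU (i := x)); first by rewrite mem_enum.
apply: (in_bigsetU (i := y)); first by rewrite mem_enum.
apply: (in_bigsetU (i := k)); first by rewrite mem_iota.
apply: (in_bigsetU (i := j)); first by rewrite mem_iota.
have sS : arrival G (Onset y) j w =
    \sum_(i < j) gap G (Onset y) i w + gap G (Onset y) j w.
  by rewrite /arrival big_ord_recr.
rewrite (negbTE xy); rewrite sS in ts close.
have S0 : 0 <= \sum_(i < j) gap G (Onset y) i w.
  by apply: sumr_ge0 => i _; exact: onset_gap_ge0.
have [m mM [lag_m gap_m]] :=
  cells_of_window T_gt0 dl_gt0 dl_le1 tT S0 (onset_gap_ge0 y j) ts close.
by apply: (in_bigsetU (i := Ordinal mM)); first exact: mem_index_enum.
Qed.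

Lemma good_event_of_not_bad : good_event G T w.
Proof.
move=> x t tT [k tk].
have t0 : 0 <= t by rewrite -tk; apply: sumr_ge0 => i _; exact: onset_gap_ge0.
have [m /andP[tm mdl]] := recovery_soon x t0 tT.
exists (arrival G (Recov x) m w); split => //; split; first by exists m.
move=> y s ts st [j sj]; have := @onsets_apart x y k j; rewrite tk sj.
lra.
Qed.
End not_bad.

End graphical_representation.

Theorem lemma1 (R : realType) (V : finType) (Ed : {set {set V}})
  (HEd : forall e, e \in Ed -> #|e| = 2%N) (lam : R) (Hlam : 0 < lam)
  (T : R) (HT : 0 < T) :
  forall eps : R, 0 < eps ->
  exists tau0 : R, forall tau : R, tau0 <= tau -> 0 < tau ->
  forall (d : measure_display) (Omega : measurableType d)
         (P : probability Omega R) (G : graphical_rep P Ed lam tau),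
  exists A : set Omega, measurable A /\ A `<=` good_event G T /\
    ((1 - eps)%:E <= P A)%E.
Proof.
move=> eps eps0; set e := eps / 4.
have e0 : 0 < e by rewrite divr_gt0.
have p1 : expR (- (T + 1)) <= 1 by rewrite expR_le1; lra.
have [N hN] := geometric_mul_le (ler0n _ #|V|) e0 (expR_gt0 _) p1.
have [dl /andP[dl0 dl1] hdl] : exists2 dl, 0 < dl <= 1 &
    dl * (#|V|%:R * N.+1%:R + #|V|%:R * (#|V|%:R * (N%:R * (N%:R * 2)))) <= e.
  by apply: exists_small_step => //; rewrite addr_ge0 // !mulr_ge0.
have [K hK] : exists K : nat, T < K.+1%:R * (dl / 2).
  exists (Num.truncn (T / (dl / 2))).
  by rewrite -ltr_pdivrMr ?truncnS_gt // divr_gt0.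
have A0 : 0 <= #|V|%:R * K.+1%:R :> R by rewrite mulr_ge0.
have [tau0 htau] := recovery_block_choice A0 e0 dl0.
exists tau0 => tau tau_ge tau_gt0 d Omega P G.
have [L [hL1 hL2]] := htau tau tau_ge.
exists (~` bad_event G T dl (dl / 2) N K L).
split; first exact/measurableC/measurable_bad_event.
split; first by move=> w; apply: good_event_of_not_bad; rewrite ?divr_gt0.
apply: probability_setC_ge; first exact: measurable_bad_event.
have c0 : 0 < dl / 2 by rewrite divr_gt0.
apply: le_trans (P_bad_event_le G N K L tau_gt0 HT dl0 c0) _.
by rewrite lee_fin natrM; move: hN hdl hL1 hL2; rewrite /e; lra.
Qed.
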